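(* Let $T$ be a theory of henselian valued fields in the Denef–Pas language $L_{Pas}$ admitting relative quantifier elimination, and let $\mathcal K$ be a sufficiently saturated model of $T$. Let $(\psi_\alpha(x,y_\alpha,z_\alpha,z'_\alpha),(b_\alpha,c_\alpha,c'_\alpha))_{\alpha<\kappa}$ be an indiscernible inp-pattern in $\{x=x\}$ in $\mathcal K$, where $x$ is a single valued field sort variable, $y_\alpha$ is a tuple of VG-sort and RF-sort variables, and $z_\alpha,z'_\alpha$ are tuples of VF-sort variables, with corresponding parameter sequences $b_\alpha=(b_{\alpha,i})_{i<\omega}$, $c_\alpha=(c_{\alpha,i})_{i<\omega}$, $c'_\alpha=(c'_{\alpha,i})_{i<\omega}$. Assume that for each $\alpha<\kappa$ there are finitely many terms $t^1_\alpha,\dots,t^{n_\alpha}_\alpha$ occurring in the VG-sort and RF-sort components of $\psi_\alpha$ such that $x$ does not appear in any $t^j_\alpha$, and every occurrence in $\psi_\alpha$ of a variable from the tuple $z_\alpha$ lies inside some $t^j_\alpha$. Then for each $\alpha<\kappa$ there exist a tuple $y'_\alpha$ of VG-sort and RF-sort variables, a corresponding parameter sequence $b'_\alpha=(b'_{\alpha,i})_{i<\omega}$, and a formula $\phi'_\alpha(x,y'_\alpha,z'_\alpha)$ such that $(\phi'_\alpha(x,y'_\alpha,z'_\alpha),(b'_\alpha,c'_\alpha))_{\alpha<\kappa}$ is an indiscernible inp-pattern of the same depth $\kappa$.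
   Context: The Denef–Pas language $L_{Pas}$ is three-sorted: a valued field sort VF with the ring language; a value group sort VG with a language $L_{vg}$ expanding the language $\{0,+,-,<,\infty\}$ of ordered abelian groups; a residue field sort RF with a language $L_{rf}$ expanding the ring language; the only cross-sort symbols are the valuation $v:\mathrm{VF}\to\mathrm{VG}$ and an angular component map $ac:\mathrm{VF}\to\mathrm{RF}$ ($ac(0)=0$, $ac(u)=u+\mathfrak m$ for units $u$ of the valuation ring, $ac$ multiplicative). A theory admits relative quantifier elimination if every formula is equivalent modulo the theory to one with no quantifiers over VF-sort variables. An indiscernible inp-pattern of depth $\kappa$ in a partial type $\pi(x)$ consists of formulas $\phi_\alpha(x,w_\alpha)$ ($\alpha<\kappa$) and parameter sequences $(d_{\alpha,i})_{i<\omega}$ with $|d_{\alpha,i}|=|w_\alpha|$ such that the sequences $(d_{\alpha,i})_{i<\omega}$, $\alpha<\kappa$, are mutually indiscernible, each set $\{\phi_\alpha(x,d_{\alpha,i}):i<\omega\}$ is inconsistent, and $\pi(x)\cup\{\phi_\alpha(x,d_{\alpha,0}):\alpha<\kappa\}$ is consistent. In the notation $(\phi_\alpha(x,y_\alpha,z_\alpha),(b_\alpha,c_\alpha))$ the parameter tuple for row $\alpha$, index $i$, is $(b_{\alpha,i},c_{\alpha,i})$. *)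

From Stdlib Require List.
From mathcomp Require Import all_boot.

Set Implicit Arguments.
Unset Strict Implicit.
Unset Printing Implicit Defensive.

Inductive psort := VF | VG | RF.

Definition sort_eq_dec (s t : psort) : {s = t} + {s <> t}.
Proof. decide equality. Defined.

Definition var := (psort * nat)%type.

Definition var_eqb (v w : var) : bool :=
  (if sort_eq_dec v.1 w.1 then true else false) && (v.2 == w.2).

Definition memv (v : var) (vs : seq var) : bool := has (var_eqb v) vs.

(* The language L_Pas: L_vg and L_rf are arbitrary expansions by       *)
(* function and relation symbols on the VG, resp. RF, psort.            *)

Record lang := Lang {
  gfun : Type; gfun_ar : gfun -> nat;
  grel : Type; grel_ar : grel -> nat;
  rfun : Type; rfun_ar : rfun -> nat;
  rrel : Type; rrel_ar : rrel -> nat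
}.

Inductive term (L : lang) : psort -> Type :=
| tvar : forall s : psort, nat -> term L s
| fzero : term L VF
| fone : term L VF
| fadd : term L VF -> term L VF -> term L VF
| fopp : term L VF -> term L VF
| fmul : term L VF -> term L VF -> term L VF
| gzero : term L VG
| ginf : term L VG
| gadd : term L VG -> term L VG -> term L VG
| gopp : term L VG -> term L VG
| gapp : forall f : gfun L, ('I_(gfun_ar f) -> term L VG) -> term L VG
| rzero : term L RF
| rone : term L RF
| radd : term L RF -> term L RF -> term L RF
| ropp : term L RF -> term L RF
| rmul : term L RF -> term L RF -> term L RF
| rapp : forall f : rfun L, ('I_(rfun_ar f) -> term L RF) -> term L RF
| tval : term L VF -> term L VG
| tac : term L VF -> term L RF.

Inductive formula (L : lang) : Type :=
| ffalse : formula L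
| feq : forall s : psort, term L s -> term L s -> formula L
| flt : term L VG -> term L VG -> formula L
| fgrel : forall r : grel L, ('I_(grel_ar r) -> term L VG) -> formula L
| frrel : forall r : rrel L, ('I_(rrel_ar r) -> term L RF) -> formula L
| fnot : formula L -> formula L
| fand : formula L -> formula L -> formula L
| fex : psort -> nat -> formula L -> formula L.

Arguments ffalse {L}.

Unset Implicit Arguments.
Record structure (L : lang) := Struc {
  carrier : psort -> Type;
  vf0 : carrier VF; vf1 : carrier VF;
  vfadd : carrier VF -> carrier VF -> carrier VF;
  vfopp : carrier VF -> carrier VF;
  vfmul : carrier VF -> carrier VF -> carrier VF;
  vg0 : carrier VG; vginf : carrier VG;
  vgadd : carrier VG -> carrier VG -> carrier VG;
  vgopp : carrier VG -> carrier VG;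
  vglt : carrier VG -> carrier VG -> Prop;
  vgfun : forall f : gfun L, ('I_(gfun_ar f) -> carrier VG) -> carrier VG;
  vgrel : forall r : grel L, ('I_(grel_ar r) -> carrier VG) -> Prop;
  rf0 : carrier RF; rf1 : carrier RF;
  rfadd : carrier RF -> carrier RF -> carrier RF;
  rfopp : carrier RF -> carrier RF;
  rfmul : carrier RF -> carrier RF -> carrier RF;
  rffun : forall f : rfun L, ('I_(rfun_ar f) -> carrier RF) -> carrier RF;
  rfrel : forall r : rrel L, ('I_(rrel_ar r) -> carrier RF) -> Prop;
  sval : carrier VF -> carrier VG;
  sac : carrier VF -> carrier RF
}.
Set Implicit Arguments.
Arguments carrier {L} s.
Arguments vf0 {L} s.
Arguments vf1 {L} s.
Arguments vfadd {L} s.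
Arguments vfopp {L} s.
Arguments vfmul {L} s.
Arguments vg0 {L} s.
Arguments vginf {L} s.
Arguments vgadd {L} s.
Arguments vgopp {L} s.
Arguments vglt {L} s.
Arguments vgfun {L} s.
Arguments vgrel {L} s.
Arguments rf0 {L} s.
Arguments rf1 {L} s.
Arguments rfadd {L} s.
Arguments rfopp {L} s.
Arguments rfmul {L} s.
Arguments rffun {L} s.
Arguments rfrel {L} s.
Arguments sval {L} s.
Arguments sac {L} s.

Section Semantics.
Variable L : lang.
Variable M : structure L.

Definition asg := forall s : psort, nat -> carrier M s.

Definition upd (e : asg) (s : psort) (n : nat) (a : carrier M s) : asg :=
  fun s' n' =>
    match sort_eq_dec s s' with
    | left H => if n == n' then eq_rect s (carrier M) a s' H else e s' n'
    | right _ => e s' n'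
    end.
Arguments upd : clear implicits.

Fixpoint teval (e : asg) (s : psort) (t : term L s) {struct t} : carrier M s :=
  match t in term _ s return carrier M s with
  | tvar s n => e s n
  | fzero => vf0 M
  | fone => vf1 M
  | fadd a b => vfadd M (teval e a) (teval e b)
  | fopp a => vfopp M (teval e a)
  | fmul a b => vfmul M (teval e a) (teval e b)
  | gzero => vg0 M
  | ginf => vginf M
  | gadd a b => vgadd M (teval e a) (teval e b)
  | gopp a => vgopp M (teval e a)
  | gapp f args => vgfun M f (fun i => teval e (args i))
  | rzero => rf0 M
  | rone => rf1 M
  | radd a b => rfadd M (teval e a) (teval e b)
  | ropp a => rfopp M (teval e a)
  | rmul a b => rfmul M (teval e a) (teval e b)
  | rapp f args => rffun M f (fun i => teval e (args i))
  | tval a => sval M (teval e a)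
  | tac a => sac M (teval e a)
  end.

Fixpoint sat (e : asg) (phi : formula L) {struct phi} : Prop :=
  match phi with
  | ffalse => False
  | feq s t1 t2 => teval e t1 = teval e t2
  | flt t1 t2 => vglt M (teval e t1) (teval e t2)
  | fgrel r args => vgrel M r (fun i => teval e (args i))
  | frrel r args => rfrel M r (fun i => teval e (args i))
  | fnot p => ~ sat e p
  | fand p q => sat e p /\ sat e q
  | fex s n p => exists a : carrier M s, sat (upd e s n a) p
  end.

Definition ovr (vs : seq var) (d e : asg) : asg :=
  fun s n => if memv (s, n) vs then d s n else e s n.

End Semantics.
Arguments upd {L M} e s n a : rename.

Fixpoint tvars (L : lang) (s : psort) (t : term L s) (v : var) {struct t} : Prop :=
  match t with
  | tvar s n => v = (s, n)
  | fzero | fone | gzero | ginf | rzero | rone => False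
  | fadd a b | fmul a b => tvars a v \/ tvars b v
  | gadd a b => tvars a v \/ tvars b v
  | radd a b | rmul a b => tvars a v \/ tvars b v
  | fopp a => tvars a v
  | gopp a => tvars a v
  | ropp a => tvars a v
  | gapp f args => exists i, tvars (args i) v
  | rapp f args => exists i, tvars (args i) v
  | tval a => tvars a v
  | tac a => tvars a v
  end.

Fixpoint fvF (L : lang) (phi : formula L) (v : var) {struct phi} : Prop :=
  match phi with
  | ffalse => False
  | feq _ t1 t2 => tvars t1 v \/ tvars t2 v
  | flt t1 t2 => tvars t1 v \/ tvars t2 v
  | fgrel r args => exists i, tvars (args i) v
  | frrel r args => exists i, tvars (args i) v
  | fnot p => fvF p v
  | fand p q => fvF p v \/ fvF q v
  | fex s n p => fvF p v /\ v <> (s, n)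
  end.

Fixpoint noVFquant (L : lang) (phi : formula L) : Prop :=
  match phi with
  | fnot p => noVFquant p
  | fand p q => noVFquant p /\ noVFquant q
  | fex s n p => s <> VF /\ noVFquant p
  | _ => True
  end.

(* Coverage: every free occurrence of a VF-variable with index in zs lies
   inside an occurrence of one of the terms ts, at a position where no
   variable of that term is bound by an enclosing quantifier
   (bnd = variables bound by the enclosing quantifiers). *)
Fixpoint covT (L : lang) (zs : seq nat) (ts : seq {s : psort & term L s})
    (bnd : seq var) (s : psort) (t : term L s) {struct t} : Prop :=
  (List.In (existT _ s t) ts /\ forall v, tvars t v -> ~ List.In v bnd) \/
  match t with
  | tvar s' n => ~ (s' = VF /\ List.In n zs /\ ~ List.In (s', n) bnd)
  | fzero | fone | gzero | ginf | rzero | rone => True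
  | fadd a b | fmul a b => covT zs ts bnd a /\ covT zs ts bnd b
  | gadd a b => covT zs ts bnd a /\ covT zs ts bnd b
  | radd a b | rmul a b => covT zs ts bnd a /\ covT zs ts bnd b
  | fopp a => covT zs ts bnd a
  | gopp a => covT zs ts bnd a
  | ropp a => covT zs ts bnd a
  | gapp f args => forall i, covT zs ts bnd (args i)
  | rapp f args => forall i, covT zs ts bnd (args i)
  | tval a => covT zs ts bnd a
  | tac a => covT zs ts bnd a
  end.

Fixpoint covF (L : lang) (zs : seq nat) (ts : seq {s : psort & term L s})
    (bnd : seq var) (phi : formula L) {struct phi} : Prop :=
  match phi with
  | ffalse => True
  | feq _ t1 t2 => covT zs ts bnd t1 /\ covT zs ts bnd t2
  | flt t1 t2 => covT zs ts bnd t1 /\ covT zs ts bnd t2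
  | fgrel r args => forall i, covT zs ts bnd (args i)
  | frrel r args => forall i, covT zs ts bnd (args i)
  | fnot p => covF zs ts bnd p
  | fand p q => covF zs ts bnd p /\ covF zs ts bnd q
  | fex s n p => covF zs ts ((s, n) :: bnd) p
  end.

Definition zvars (zs : seq nat) : seq var := map (fun n => (VF, n)) zs.

Definition theory (L : lang) := formula L -> Prop.

Definition model (L : lang) (T : theory L) (M : structure L) : Prop :=
  forall phi, T phi -> forall e : asg M, sat e phi.

Definition relQE (L : lang) (T : theory L) : Prop :=
  forall phi : formula L, exists psi : formula L, noVFquant psi /\
    forall M : structure L, model T M -> forall e : asg M, sat e phi <-> sat e psi.

Definition is_field (A : Type) (z o : A) (add : A -> A -> A) (opp : A -> A)
    (mul : A -> A -> A) : Prop :=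
  [/\ (forall x y w, add x (add y w) = add (add x y) w) /\
        (forall x y, add x y = add y x) /\ (forall x, add z x = x) /\
        (forall x, add (opp x) x = z),
      (forall x y w, mul x (mul y w) = mul (mul x y) w) /\
        (forall x y, mul x y = mul y x) /\ (forall x, mul o x = x),
      (forall x y w, mul x (add y w) = add (mul x y) (mul x w)),
      o <> z
    & (forall x, x <> z -> exists y, mul x y = o)].

Definition is_oag_inf (G : Type) (z inf : G) (add : G -> G -> G) (opp : G -> G)
    (lt : G -> G -> Prop) : Prop :=
  let fin g := g <> inf in
  [/\ (forall g, ~ lt g g) /\ (forall g h k, lt g h -> lt h k -> lt g k) /\
        (forall g h, lt g h \/ g = h \/ lt h g),
      (forall g, fin g -> lt g inf) /\ fin z,
      (forall g h, fin g -> fin h -> fin (add g h)) /\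
        (forall g, fin g -> fin (opp g)),
      (forall g h k, fin g -> fin h -> fin k -> add g (add h k) = add (add g h) k) /\
        (forall g h, fin g -> fin h -> add g h = add h g) /\
        (forall g, fin g -> add z g = g) /\
        (forall g, fin g -> add (opp g) g = z) /\
        (forall g h k, fin g -> fin h -> fin k -> lt g h -> lt (add g k) (add h k))
    & forall g, add g inf = inf /\ add inf g = inf].

(* polynomials as coefficient lists [c0; c1; ...] *)
Definition peval (A : Type) (z : A) (add mul : A -> A -> A) (p : seq A) (a : A) : A :=
  foldr (fun c acc => add c (mul a acc)) z p.

Definition pderiv (A : Type) (z : A) (add : A -> A -> A) (p : seq A) : seq A :=
  mkseq (fun i => iter i.+1 (add (nth z p i.+1)) z) (size p).-1.

Definition hvf_ac (L : lang) (M : structure L) : Prop :=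
  let v := sval M in
  let le g h := vglt M g h \/ g = h in
  let O x := le (vg0 M) (v x) in
  let pev := peval (vf0 M) (vfadd M) (vfmul M) in
  [/\ is_field (vf0 M) (vf1 M) (vfadd M) (vfopp M) (vfmul M),
      is_field (rf0 M) (rf1 M) (rfadd M) (rfopp M) (rfmul M),
      is_oag_inf (vg0 M) (vginf M) (vgadd M) (vgopp M) (vglt M),
      (forall x, v x = vginf M <-> x = vf0 M) /\
      (forall x y, v (vfmul M x y) = vgadd M (v x) (v y)) /\
      (forall x y, le (v x) (v (vfadd M x y)) \/ le (v y) (v (vfadd M x y))) /\
      (forall g, exists x, v x = g) /\
      (* ac: ac(0) = 0, multiplicative, and ac(u) = u + m for units u, where
         RF is identified with O/m via the residue map res *)
      sac M (vf0 M) = rf0 M /\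
      (forall x y, sac M (vfmul M x y) = rfmul M (sac M x) (sac M y)) /\
      (exists res : carrier M VF -> carrier M RF,
         (forall x y, O x -> O y -> res (vfadd M x y) = rfadd M (res x) (res y)) /\
         (forall x y, O x -> O y -> res (vfmul M x y) = rfmul M (res x) (res y)) /\
         res (vf1 M) = rf1 M /\
         (forall r, exists x, O x /\ res x = r) /\
         (forall x, O x -> (res x = rf0 M <-> vglt M (vg0 M) (v x))) /\
         (forall u, v u = vg0 M -> sac M u = res u))
    &
      forall (p : seq (carrier M VF)) (a : carrier M VF),
        p <> [::] -> last (vf0 M) p = vf1 M -> (forall c, List.In c p -> O c) ->
        O a -> vglt M (vg0 M) (v (pev p a)) ->
        v (pev (pderiv (vf0 M) (vfadd M) p) a) = vg0 M ->
        exists b, O b /\ pev p b = vf0 M /\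
                  vglt M (vg0 M) (v (vfadd M b (vfopp M a)))].

Definition hvf_theory (L : lang) (T : theory L) : Prop :=
  forall M : structure L, model T M -> hvf_ac M.

Definition small (X Lam : Type) : Prop :=
  (exists f : X -> Lam, injective f) /\ ~ (exists g : Lam -> X, injective g).

(* A formula over A is a formula together with an assignment sending its
   other free variables into A. *)
Definition saturated (L : lang) (Lam : Type) (M : structure L) : Prop :=
  forall (A : forall s, carrier M s -> Prop),
    small {s : psort & {a : carrier M s | A s a}} Lam ->
    forall (s0 : psort) (n0 : nat) (P : formula L -> asg M -> Prop),
      (forall phi e, P phi e -> forall s n, fvF phi (s, n) -> (s, n) <> (s0, n0) ->
                     A s (e s n)) ->
      (forall l : seq (formula L * asg M), (forall q, List.In q l -> P q.1 q.2) ->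
         exists a, forall q, List.In q l -> sat (upd q.2 s0 n0 a) q.1) ->
      exists a, forall phi e, P phi e -> sat (upd e s0 n0 a) phi.

Section Indisc.
Variable L : lang.
Variable M : structure L.

Fixpoint place (vs : seq var) (sl : seq nat) (d e : asg M) : asg M :=
  match vs, sl with
  | v :: vs', n :: sl' => upd (place vs' sl' d e) v.1 n (d v.1 v.2)
  | _, _ => e
  end.

Fixpoint fill (vs : seq var) (sls : seq (seq nat)) (d : nat -> asg M)
    (I : seq nat) (e : asg M) : asg M :=
  match sls, I with
  | sl :: sls', i :: I' => place vs sl (d i) (fill vs sls' d I' e)
  | _, _ => e
  end.

Definition slotvar (vs : seq var) (sls : seq (seq nat)) (v : var) : Prop :=
  exists sl, List.In sl sls /\ exists j, j < minn (size vs) (size sl) /\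
    v = ((nth (VF, 0) vs j).1, nth 0 sl j).

Definition indisc_over (vs : seq var) (d : nat -> asg M)
    (A : forall s, carrier M s -> Prop) : Prop :=
  forall (theta : formula L) (sls : seq (seq nat)) (I J : seq nat) (e : asg M),
    (forall s n, fvF theta (s, n) -> ~ slotvar vs sls (s, n) -> A s (e s n)) ->
    size I = size sls -> size J = size sls -> sorted ltn I -> sorted ltn J ->
    (sat (fill vs sls d I e) theta <-> sat (fill vs sls d J e) theta).

Definition mut_indisc (kap : Type) (vars : kap -> seq var)
    (d : kap -> nat -> asg M) : Prop :=
  forall al : kap, indisc_over (vars al) (d al)
    (fun s a => exists (be : kap) (i n : nat),
        be <> al /\ List.In (s, n) (vars be) /\ a = d be i s n).

(* phi(x, d_i): x := (VF, xn) gets a, the parameter variables get d_i *)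
Definition inst (xn : nat) (vs : seq var) (di e : asg M) (a : carrier M VF) : asg M :=
  upd (ovr vs di e) VF xn a.

(* An indiscernible inp-pattern in the partial type pi(x), x = (VF, xn), of
   depth kap: rows phi al (x, vars al) with parameter sequences
   (d al i restricted to vars al)_{i<omega}. *)
Definition indisc_inp_pattern (pi : formula L -> Prop) (xn : nat) (kap : Type)
    (phi : kap -> formula L) (vars : kap -> seq var) (d : kap -> nat -> asg M) : Prop :=
  (forall al v, fvF (phi al) v -> v = (VF, xn) \/ List.In v (vars al)) /\
  (forall al, ~ List.In (VF, xn) (vars al)) /\
  (forall p v, pi p -> fvF p v -> v = (VF, xn)) /\
  mut_indisc vars d /\
  (forall al, exists I : seq nat, forall e a,
      ~ (forall i, List.In i I -> sat (inst xn (vars al) (d al i) e a) (phi al))) /\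
  (forall (F : seq kap) (P : seq (formula L)), (forall p, List.In p P -> pi p) ->
     exists e a, (forall p, List.In p P -> sat (upd e VF xn a) p) /\
       forall al, List.In al F -> sat (inst xn (vars al) (d al 0) e a) (phi al)).

End Indisc.

Definition xeqx (L : lang) (xn : nat) : formula L -> Prop :=
  fun p => p = feq (tvar L VF xn) (tvar L VF xn).

(* Name each covering term t(y, z, z') whose variables are parameters by a new
   VG/RF-sorted variable w, and put
     phi'(x, y w, z') := exists z, w = t(y, z, z') /\ psi(x, y, z, z'),
   with new parameters b'_i := (b_i, t(b_i, c_i, c'_i)). Since psi sees z only
   through the terms t, phi'(x, b'_i, c'_i) is equivalent to psi(x, b_i, c_i, c'_i),
   so the rows stay inconsistent and the first column stays consistent. The new
   parameters are terms in the old ones, so mutual indiscernibility transfers: a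
   formula about new parameters becomes a formula about old ones by let-binding
   each new parameter to its defining term evaluated in fresh variables. *)

From Pilot Require Import Defs.
From Stdlib Require List.
From Stdlib Require Import Eqdep_dec.
From mathcomp Require Import all_boot zify boolp.

Set Implicit Arguments.
Unset Strict Implicit.
Unset Printing Implicit Defensive.

Lemma NoDup_app_disjoint (T : Type) (s1 s2 : seq T) x :
  List.NoDup (s1 ++ s2) -> List.In x s1 -> ~ List.In x s2.
Proof.
elim: s1 => [|y s1 IH] //= Hnd; inversion Hnd; subst => -[<-|Hx] Hx2.
- by apply: H1; apply/List.in_app_iff; right.
- exact: IH H2 Hx Hx2.
Qed.

Lemma nth_In (T : Type) (x0 : T) s k : k < size s -> List.In (nth x0 s k) s.
Proof. by elim: s k => [|y s IH] [|k] //= Hk; [left | right; apply: IH]. Qed.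

Lemma In_nth_index (T : Type) (x0 : T) x s :
  List.In x s -> exists2 k, k < size s & nth x0 s k = x.
Proof.
elim: s => [|y s IH] //= [->|/IH [k Hk <-]]; first by exists 0.
by exists k.+1.
Qed.

Lemma In_mkseq (T : Type) (f : nat -> T) n x :
  List.In x (mkseq f n) <-> exists2 k, k < n & x = f k.
Proof.
rewrite List.in_map_iff; split => [[k [<- /List.in_seq Hk]]|[k Hk ->]].
  by exists k => //; lia.
by exists k; split => //; apply/List.in_seq; lia.
Qed.

Lemma var_eqbP (v w : var) : reflect (v = w) (var_eqb v w).
Proof.
case: v w => [s n] [s' n']; rewrite /var_eqb /=.
case: sort_eq_dec => [Es|Hs] /=; last by constructor => -[].
by subst; apply: (iffP eqP) => [->|[]].
Qed.

Lemma memvP v vs : reflect (List.In v vs) (memv v vs).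
Proof.
elim: vs => [|w vs IH] /=; first by constructor.
rewrite /memv /=; case: (var_eqbP v w) => [->|Hvw] /=; first by constructor; left.
by apply: (iffP IH) => [|[E|]]; [right | case: Hvw |].
Qed.

Definition vidx (v : var) (vs : seq var) : nat := find (var_eqb v) vs.

Lemma vidx_lt v vs : List.In v vs -> vidx v vs < size vs.
Proof. by move=> /memvP; rewrite /vidx -has_find. Qed.

Lemma nth_vidx v vs : List.In v vs -> nth (VF, 0) vs (vidx v vs) = v.
Proof. by move=> /memvP /(nth_find (VF, 0)) /var_eqbP. Qed.

Lemma In_zvars v ns : List.In v (zvars ns) <-> v.1 = VF /\ List.In v.2 ns.
Proof.
case: v => s n /=; elim: ns => [|m ns IH] /=; first by split => [|[]].
by rewrite IH; split => [[[-> ->]|[-> H]]|[-> [->|H]]]; auto.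
Qed.

Section Semantics.
Variables (L : lang) (M : structure L).
Implicit Types (e g h : asg M).

Lemma upd_same e s n a : upd e s n a s n = a.
Proof.
rewrite /upd; case: (sort_eq_dec s s) => [E|//].
by rewrite eqxx (UIP_dec sort_eq_dec E erefl).
Qed.

Lemma upd_other e s n a s' n' : (s, n) <> (s', n') -> upd e s n a s' n' = e s' n'.
Proof. by rewrite /upd; case: sort_eq_dec => // Es; subst; case: eqP => // <-. Qed.

Lemma upd_ext e1 e2 s n a s' n' :
  e1 s' n' = e2 s' n' -> upd e1 s n a s' n' = upd e2 s n a s' n'.
Proof. by rewrite /upd; case: sort_eq_dec => // Es; case: eqP. Qed.

Lemma ovr_in vs h g v : List.In v vs -> ovr vs h g v.1 v.2 = h v.1 v.2.
Proof. by case: v => s n /memvP Hv; rewrite /ovr Hv. Qed.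

Lemma ovr_notin vs h g v : ~ List.In v vs -> ovr vs h g v.1 v.2 = g v.1 v.2.
Proof. by case: v => s n Hv; rewrite /ovr; case: memvP. Qed.

Lemma teval_ext s (t : term L s) g1 g2 :
  (forall s' n', tvars t (s', n') -> g1 s' n' = g2 s' n') -> teval g1 t = teval g2 t.
Proof.
elim: t => //=.
- by move=> s0 n; apply.
all: first
  [ by move=> t IHt u IHu H; rewrite IHt ?IHu // => ? ? ?; apply: H; [right|left]
  | by move=> f args IH H; congr (_ _ _); apply: funext => i;
       apply: IH => ? ? ?; apply: H; exists i
  | by move=> t IHt H; rewrite IHt ].
Qed.

Lemma sat_ext (phi : formula L) g1 g2 :
  (forall s n, fvF phi (s, n) -> g1 s n = g2 s n) -> (sat g1 phi <-> sat g2 phi).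
Proof.
elim: phi g1 g2 => /=.
- by [].
- by move=> s t1 t2 g1 g2 H; rewrite (teval_ext (t := t1) (g2 := g2))
       ?(teval_ext (t := t2) (g2 := g2)) // => ? ? ?; apply: H; [right|left].
- by move=> t1 t2 g1 g2 H; rewrite (teval_ext (t := t1) (g2 := g2))
       ?(teval_ext (t := t2) (g2 := g2)) // => ? ? ?; apply: H; [right|left].
- move=> r args g1 g2 H.
  suff -> : (fun i => teval g1 (args i)) = (fun i => teval g2 (args i)) by [].
  by apply: funext => i; apply: teval_ext => ? ? ?; apply: H; exists i.
- move=> r args g1 g2 H.
  suff -> : (fun i => teval g1 (args i)) = (fun i => teval g2 (args i)) by [].
  by apply: funext => i; apply: teval_ext => ? ? ?; apply: H; exists i.
- by move=> p IH g1 g2 H; rewrite (IH g1 g2 H).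
- by move=> p IHp q IHq g1 g2 H; rewrite (IHp g1 g2) ?(IHq g1 g2) // => ? ? ?;
     apply: H; [right|left].
- move=> s n p IH g1 g2 H.
  have Ea a : sat (upd g1 s n a) p <-> sat (upd g2 s n a) p.
    apply: IH => s' n' Hf; case: (var_eqbP (s, n) (s', n')) => [[<- <-]|Ne].
      by rewrite !upd_same.
    by rewrite !upd_other //; apply: H; split => // E; apply: Ne; rewrite E.
  by split=> -[a Ha]; exists a; apply/Ea.
Qed.

Lemma sat_ext_imp (phi : formula L) g1 g2 :
  (forall s n, fvF phi (s, n) -> g1 s n = g2 s n) -> sat g1 phi -> sat g2 phi.
Proof. by move=> H; apply (sat_ext H). Qed.

Lemma inst_in xn vs di e a v :
  List.In v vs -> ~ List.In (VF, xn) vs -> inst xn vs di e a v.1 v.2 = di v.1 v.2.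
Proof.
move=> Hv Hx; rewrite /inst upd_other ?ovr_in //.
by case: v Hv => s n Hv E; apply: Hx; rewrite E.
Qed.

End Semantics.

Section Renaming.
Variable L : lang.

Fixpoint trename (f : psort -> nat -> nat) s (t : term L s) {struct t} : term L s :=
  match t in term _ s return term L s with
  | tvar s n => tvar L s (f s n)
  | fzero => fzero L
  | fone => fone L
  | fadd a b => fadd (trename f a) (trename f b)
  | fopp a => fopp (trename f a)
  | fmul a b => fmul (trename f a) (trename f b)
  | gzero => gzero L
  | ginf => ginf L
  | gadd a b => gadd (trename f a) (trename f b)
  | gopp a => gopp (trename f a)
  | gapp g args => gapp (fun i => trename f (args i))
  | rzero => rzero L
  | rone => rone L
  | radd a b => radd (trename f a) (trename f b)
  | ropp a => ropp (trename f a)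
  | rmul a b => rmul (trename f a) (trename f b)
  | rapp g args => rapp (fun i => trename f (args i))
  | Defs.tval a => Defs.tval (trename f a)
  | tac a => tac (trename f a)
  end.

Lemma tvars_trename f s (t : term L s) v :
  tvars (trename f t) v -> exists2 n, tvars t (v.1, n) & v.2 = f v.1 n.
Proof.
elim: t => //=.
- by move=> s0 n ->; exists n.
all: first
  [ by move=> t IHt u IHu [/IHt|/IHu] [n Hn E]; exists n; auto
  | by move=> g args IH [i /IH [n Hn E]]; exists n => //; exists i
  | by [] ].
Qed.

Lemma teval_trename (M : structure L) f (g : asg M) s (t : term L s) :
  teval g (trename f t) = teval (fun s n => g s (f s n)) t.
Proof.
elim: t => //=.
all: first
  [ by move=> t IHt u IHu; rewrite IHt IHu
  | by move=> h args IH; congr (_ _ _); apply: funext => i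
  | by move=> t ->].
Qed.

Fixpoint tbound s (t : term L s) {struct t} : nat :=
  match t with
  | tvar s n => n.+1
  | fzero | fone | gzero | ginf | rzero | rone => 0
  | fadd a b | fmul a b => maxn (tbound a) (tbound b)
  | gadd a b => maxn (tbound a) (tbound b)
  | radd a b | rmul a b => maxn (tbound a) (tbound b)
  | fopp a => tbound a
  | gopp a => tbound a
  | ropp a => tbound a
  | gapp g args => \max_(i : 'I_(gfun_ar g)) tbound (args i)
  | rapp g args => \max_(i : 'I_(rfun_ar g)) tbound (args i)
  | Defs.tval a => tbound a
  | tac a => tbound a
  end.

Fixpoint fbound (phi : formula L) : nat :=
  match phi with
  | ffalse => 0
  | feq _ a b => maxn (tbound a) (tbound b)
  | flt a b => maxn (tbound a) (tbound b)
  | fgrel r args => \max_(i : 'I_(grel_ar r)) tbound (args i)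
  | frrel r args => \max_(i : 'I_(rrel_ar r)) tbound (args i)
  | fnot p => fbound p
  | fand p q => maxn (fbound p) (fbound q)
  | fex _ _ p => fbound p
  end.

Lemma tbound_gt s (t : term L s) v : tvars t v -> v.2 < tbound t.
Proof.
elim: t => //=.
- by move=> s0 n ->.
all: first
  [ by move=> t IHt u IHu [/IHt|/IHu] H; rewrite leq_max H ?orbT
  | by move=> f args IH [i /IH H]; apply: leq_trans H (leq_bigmax i)
  | by [] ].
Qed.

Lemma fbound_gt (phi : formula L) v : fvF phi v -> v.2 < fbound phi.
Proof.
elim: phi => //=.
- by move=> s t1 t2 [/tbound_gt|/tbound_gt] H; rewrite leq_max H ?orbT.
- by move=> t1 t2 [/tbound_gt|/tbound_gt] H; rewrite leq_max H ?orbT.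
- by move=> r args [i /tbound_gt H]; apply: leq_trans H (leq_bigmax i).
- by move=> r args [i /tbound_gt H]; apply: leq_trans H (leq_bigmax i).
- by move=> p IHp q IHq [/IHp|/IHq] H; rewrite leq_max H ?orbT.
- by move=> s n p IH [/IH].
Qed.

End Renaming.

Section Filling.
Variables (L : lang) (M : structure L).
Implicit Types (d e : asg M) (D : nat -> asg M).

Lemma place_notin vs sl d e s m : ~ List.In m sl -> place vs sl d e s m = e s m.
Proof.
elim: vs sl => [|v vs IH] [|n sl] //= Hm.
by rewrite upd_other => [|[_ E]]; [apply: IH => H; apply: Hm; right | apply: Hm; left].
Qed.

Lemma fill_notin vs sls D I e s m :
  (forall sl, List.In sl sls -> ~ List.In m sl) -> fill vs sls D I e s m = e s m.
Proof.
elim: sls I => [|sl sls IH] [|i I] //= Hm.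
by rewrite place_notin; [apply: IH => sl' H; apply: Hm; right | apply: Hm; left].
Qed.

Lemma place_ext vs sl d e1 e2 s m :
  e1 s m = e2 s m -> place vs sl d e1 s m = place vs sl d e2 s m.
Proof. by elim: vs sl => [|v vs IH] [|n sl] //= H; apply: upd_ext; apply: IH. Qed.

Lemma fill_ext vs sls D I e1 e2 s m :
  e1 s m = e2 s m -> fill vs sls D I e1 s m = fill vs sls D I e2 s m.
Proof. by elim: sls I => [|sl sls IH] [|i I] //= H; apply: place_ext; apply: IH. Qed.

Lemma place_nonslot vs sl d e s m :
  (forall j, j < minn (size vs) (size sl) -> ((nth (VF, 0) vs j).1, nth 0 sl j) <> (s, m)) ->
  place vs sl d e s m = e s m.
Proof.
elim: vs sl => [|v vs IH] [|n sl] //= H.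
rewrite upd_other; last by apply: (H 0); rewrite minnSS.
by apply: IH => j Hj; apply: (H j.+1); rewrite minnSS.
Qed.

Lemma fill_nonslot vs sls D I e s m :
  ~ slotvar vs sls (s, m) -> fill vs sls D I e s m = e s m.
Proof.
elim: sls I => [|sl sls IH] [|i I] //= Hns.
rewrite place_nonslot => [|j Hj E].
  by apply: IH => -[sl' [Hin Hj]]; apply: Hns; exists sl'; split => //; right.
by apply: Hns; exists sl; split; [left | exists j; rewrite E].
Qed.

Lemma place_nth vs sl d e k :
  uniq sl -> k < size vs -> k < size sl ->
  place vs sl d e (nth (VF, 0) vs k).1 (nth 0 sl k)
  = d (nth (VF, 0) vs k).1 (nth (VF, 0) vs k).2.
Proof.
elim: vs sl k => [|v vs IH] [|n sl] [|k] //=; first by rewrite upd_same.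
case/andP => Hn Hu Hk1 Hk2; rewrite upd_other; first exact: IH.
by case=> _ E; move: Hn; rewrite E mem_nth.
Qed.

End Filling.

Section LetBindings.
Variable L : lang.

Definition defn := {s : psort & (nat * term L s)%type}.
Definition defn_var (p : defn) : var := (projT1 p, (projT2 p).1).

(* [flet P R] is [exists v (v = t /\ R)] for each binding [v := t] of [P],
   the head of [P] being the innermost binder. *)
Fixpoint flet (P : seq defn) (R : formula L) : formula L :=
  match P with
  | [::] => R
  | p :: P' => flet P' (fex (projT1 p) (projT2 p).1
                 (fand (feq (tvar L (projT1 p) (projT2 p).1) (projT2 p).2) R))
  end.

Fixpoint fexVF (ns : seq nat) (R : formula L) : formula L :=
  if ns is n :: ns' then fex VF n (fexVF ns' R) else R.

Fixpoint feqs (ws : seq var) (u : forall v : var, term L v.1) : formula L :=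
  if ws is w :: ws' then fand (feq (tvar L w.1 w.2) (u w)) (feqs ws' u)
  else fnot ffalse.

Lemma fvF_flet P R v : fvF (flet P R) v ->
  (fvF R v /\ ~ List.In v (map defn_var P)) \/
  exists2 p, List.In p P & tvars (projT2 p).2 v.
Proof.
elim: P R => [|p P IH] R /=; first by move=> H; left; split.
case/IH => [[/= [[[E|Ht]|HR] Hne] Hn]|[p' Hp' Ht]].
- by case: Hne.
- by right; exists p; [left|].
- by left; split => // -[E|//]; apply: Hne; rewrite -E.
- by right; exists p'; [right|].
Qed.

Lemma fvF_fexVF ns R v : fvF (fexVF ns R) v -> fvF R v /\ ~ List.In v (zvars ns).
Proof.
elim: ns => [|n ns IH] /=; first by move=> H; split.
case=> /IH [HR Hn] Hne; split => // -[E|//].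
by apply: Hne; rewrite -E.
Qed.

Lemma fvF_feqs ws u v : fvF (feqs ws u) v ->
  exists2 w, List.In w ws & v = w \/ tvars (u w) v.
Proof.
elim: ws => [|w ws IH] //= [[E|Ht]|/IH [w' Hw' H]].
- by exists w; [left | left; case: w E].
- by exists w; [left | right].
- by exists w'; [right|].
Qed.

Section Sat.
Variable M : structure L.
Implicit Types (e g h : asg M).

Fixpoint upd_defs g (P : seq defn) (base : asg M) : asg M :=
  if P is p :: P' then
    upd (upd_defs g P' base) (projT1 p) (projT2 p).1 (teval g (projT2 p).2)
  else base.

Lemma upd_defs_notin g P base s m :
  ~ List.In (s, m) (map defn_var P) -> upd_defs g P base s m = base s m.
Proof.
elim: P => [|p P IH] //= Hn; rewrite upd_other => [|E].
  by apply: IH => H; apply: Hn; right.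
by apply: Hn; left; rewrite /defn_var E.
Qed.

Lemma upd_defs_ext g P b1 b2 s m :
  b1 s m = b2 s m -> upd_defs g P b1 s m = upd_defs g P b2 s m.
Proof. by elim: P => [|p P IH] //= H; apply: upd_ext; apply: IH. Qed.

Lemma upd_defs_cat g P1 P2 base :
  upd_defs g (P1 ++ P2) base = upd_defs g P1 (upd_defs g P2 base).
Proof. by elim: P1 => [|p P1 IH] //=; rewrite IH. Qed.

Lemma sat_flet P R g :
  (forall p, List.In p P -> forall v, tvars (projT2 p).2 v -> ~ List.In v (map defn_var P)) ->
  (sat g (flet P R) <-> sat (upd_defs g P g) R).
Proof.
elim: P R => [|[s [n t]] P IH] R //= Hfresh.
rewrite IH => [|p' Hp' v Hv Hin]; last by apply: (Hfresh p' (or_intror Hp') v Hv); right.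
set G := upd_defs g P g.
have Et a : teval (upd G s n a) t = teval g t.
  apply: teval_ext => s' n' Hv; have Hn := Hfresh _ (or_introl erefl) _ Hv.
  rewrite upd_other => [|E]; last by apply: Hn; left; rewrite /defn_var /= E.
  by rewrite /G upd_defs_notin // => H; apply: Hn; right.
split=> [[a /= [Ea HR]]|HR]; first by move: HR; rewrite upd_same in Ea; rewrite Ea Et.
by exists (teval g t) => /=; rewrite upd_same Et.
Qed.

Lemma ovr_cons_VF n ns h g s m :
  ovr (zvars (n :: ns)) h g s m = ovr (zvars ns) h (upd g VF n (h VF n)) s m.
Proof.
rewrite /ovr /memv /=.
case: (var_eqbP (s, m) (VF, n)) => [[-> ->]|Ne] /=.
  by case: has; rewrite ?upd_same.
by case: has => //; rewrite upd_other // => E; apply: Ne; rewrite E.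
Qed.

Lemma sat_fexVF ns R g :
  sat g (fexVF ns R) <-> exists h, sat (ovr (zvars ns) h g) R.
Proof.
elim: ns g => [|n ns IH] g /=.
  by split=> [HR|[h]]; [exists g|]; apply: sat_ext_imp.
split=> [[a /IH [h Hh]]|[h Hh]]; last first.
  exists (h VF n); apply/IH; exists h.
  by move: Hh; apply: sat_ext_imp => s m _; apply: ovr_cons_VF.
exists (ovr (zvars ns) h (upd g VF n a)); move: Hh; apply: sat_ext_imp => s m _.
case: (memvP (s, m) (zvars (n :: ns))) => Hin; first by rewrite (ovr_in _ _ Hin).
rewrite (ovr_notin _ _ Hin) (@ovr_notin _ _ _ _ _ (s, m)) => [|H]; last by apply: Hin; right.
by rewrite upd_other // => E; apply: Hin; left.
Qed.

Lemma sat_feqs ws u g :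
  sat g (feqs ws u) <-> forall w, List.In w ws -> g w.1 w.2 = teval g (u w).
Proof.
elim: ws => [|w ws IH] /=; first by split=> [_ ? []|_ []].
rewrite IH; split=> [[E H] w' [<-|/H]|H] //.
by split=> [|w' Hw']; apply: H; [left|right].
Qed.

End Sat.
End LetBindings.

Section Coverage.
Variables (L : lang) (M : structure L).
Variables (zs : seq nat) (ts : seq {s : psort & term L s}) (Q : var -> Prop).

(* [Q] contains the free variables of the formula under consideration; [bnd]
   are the variables bound by the enclosing quantifiers. *)
Definition agree_off_zs bnd (g1 g2 : asg M) :=
  forall v, List.In v bnd \/ Q v -> ~ (v.1 = VF /\ List.In v.2 zs /\ ~ List.In v bnd) ->
    g1 v.1 v.2 = g2 v.1 v.2.

Definition agree_on_ts bnd (g1 g2 : asg M) :=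
  forall t, List.In t ts -> (forall v, tvars (projT2 t) v -> Q v) ->
    (forall v, tvars (projT2 t) v -> ~ List.In v bnd) ->
    teval g1 (projT2 t) = teval g2 (projT2 t).

Lemma covT_teval bnd g1 g2 : agree_off_zs bnd g1 g2 -> agree_on_ts bnd g1 g2 ->
  forall s (t : term L s), covT zs ts bnd t ->
  (forall v, tvars t v -> ~ List.In v bnd -> Q v) -> teval g1 t = teval g2 t.
Proof.
move=> Hoff Hts.
have Hcov s (t : term L s) : List.In (existT _ s t) ts ->
    (forall v, tvars t v -> ~ List.In v bnd) ->
    (forall v, tvars t v -> ~ List.In v bnd -> Q v) -> teval g1 t = teval g2 t.
  by move=> Hin Hb HQ; apply: (Hts _ Hin) => //= v Hv; apply: HQ v Hv (Hb v Hv).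
move=> s t; elim: t => /=.
- move=> s0 n [[Hin Hb] HQ|Hnz HQ]; first exact: Hcov Hin Hb HQ.
  apply: (Hoff (s0, n)) => //.
  by case: (memvP (s0, n) bnd) => Hb; [left | right; apply: HQ].
all: try by move=> [[Hin Hb] HQ|].
all: first
  [ move=> t IHt u IHu [[Hin Hb] HQ|[Ht Hu] HQ]; first exact: Hcov Hin Hb HQ;
    by rewrite (IHt Ht) ?(IHu Hu) // => v Hv Hb; apply: HQ => //; [right|left]
  | move=> f args IH [[Hin Hb] HQ|Hargs HQ]; first exact: Hcov Hin Hb HQ;
    congr (_ _ _); apply: funext => i;
    by apply: (IH i (Hargs i)) => v Hv Hb; apply: HQ => //; exists i
  | move=> t IHt [[Hin Hb] HQ|Ht HQ]; first exact: Hcov Hin Hb HQ;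
    by rewrite (IHt Ht) // => v Hv Hb; apply: HQ ].
Qed.

Lemma agree_off_zs_upd bnd g1 g2 s n a : agree_off_zs bnd g1 g2 ->
  agree_off_zs ((s, n) :: bnd) (upd g1 s n a) (upd g2 s n a).
Proof.
move=> Hoff [s' n'] Hq Hnz; case: (var_eqbP (s, n) (s', n')) => [[<- <-]|Ne].
  by rewrite !upd_same.
rewrite !upd_other //; apply: (Hoff (s', n')).
  by case: Hq => [[E|H]|H]; [case: Ne | left | right].
by case=> /= [Hs [Hz Hb]]; apply: Hnz; do 2!split => //; case.
Qed.

Lemma agree_on_ts_upd bnd g1 g2 s n a : agree_on_ts bnd g1 g2 ->
  agree_on_ts ((s, n) :: bnd) (upd g1 s n a) (upd g2 s n a).
Proof.
move=> Hts t Hin HQ Hb.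
have Eupd (g : asg M) : teval (upd g s n a) (projT2 t) = teval g (projT2 t).
  by apply: teval_ext => s' n' Hv; rewrite upd_other // => E; apply: (Hb _ Hv); left.
by rewrite !Eupd; apply: Hts => // v Hv Hi; apply: (Hb v Hv); right.
Qed.

Lemma covF_sat (phi : formula L) bnd g1 g2 :
  agree_off_zs bnd g1 g2 -> agree_on_ts bnd g1 g2 -> covF zs ts bnd phi ->
  (forall v, fvF phi v -> ~ List.In v bnd -> Q v) -> (sat g1 phi <-> sat g2 phi).
Proof.
have Hargs n (args : 'I_n -> _) bnd' g1' g2' : agree_off_zs bnd' g1' g2' ->
    agree_on_ts bnd' g1' g2' -> (forall i, covT zs ts bnd' (args i)) ->
    (forall v, (exists i, tvars (args i) v) -> ~ List.In v bnd' -> Q v) ->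
    (fun i => teval g1' (args i)) = (fun i => teval g2' (args i)).
  move=> Hoff Hts Hc HQ; apply: funext => i; apply: (covT_teval Hoff Hts (Hc i)).
  by move=> v Hv; apply: HQ; exists i.
elim: phi bnd g1 g2 => /=.
- by [].
- move=> s t1 t2 bnd g1 g2 Hoff Hts [Ht1 Ht2] HQ.
  by rewrite (covT_teval Hoff Hts Ht1) ?(covT_teval Hoff Hts Ht2) // => v Hv;
     apply: HQ; [right|left].
- move=> t1 t2 bnd g1 g2 Hoff Hts [Ht1 Ht2] HQ.
  by rewrite (covT_teval Hoff Hts Ht1) ?(covT_teval Hoff Hts Ht2) // => v Hv;
     apply: HQ; [right|left].
- by move=> r args bnd g1 g2 Hoff Hts Hc HQ; rewrite (Hargs _ _ _ _ _ _ Hoff Hts Hc HQ).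
- by move=> r args bnd g1 g2 Hoff Hts Hc HQ; rewrite (Hargs _ _ _ _ _ _ Hoff Hts Hc HQ).
- by move=> p IH bnd g1 g2 Hoff Hts Hc HQ; rewrite (IH bnd g1 g2).
- move=> p IHp q IHq bnd g1 g2 Hoff Hts [Hp Hq] HQ.
  by rewrite (IHp bnd g1 g2) ?(IHq bnd g1 g2) // => v Hv; apply: HQ; [right|left].
- move=> s n p IH bnd g1 g2 Hoff Hts Hc HQ.
  suff Ea a : sat (upd g1 s n a) p <-> sat (upd g2 s n a) p.
    by split=> -[a Ha]; exists a; apply/Ea.
  apply: (IH ((s, n) :: bnd)) => //; [exact: agree_off_zs_upd | exact: agree_on_ts_upd |].
  move=> v Hv Hb; apply: HQ; first by split => // E; apply: Hb; left.
  by move=> Hi; apply: Hb; right.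
Qed.

End Coverage.

Definition block (B W r : nat) : seq nat := mkseq (fun k => B + r * W + k) W.

Lemma fill_blocks_nth (L : lang) (M : structure L) B vs (D : nat -> asg M) (e : asg M)
    m q Ks r k :
  size Ks = m -> q <= r < q + m -> k < size vs ->
  fill vs (map (block B (size vs)) (iota q m)) D Ks e
    (nth (VF, 0) vs k).1 (B + r * size vs + k)
  = D (nth 0 Ks (r - q)) (nth (VF, 0) vs k).1 (nth (VF, 0) vs k).2.
Proof.
elim: m q Ks => [|m IH] q [|i Ks] //=; first by lia.
move=> [Hs] Hr Hk; case: (eqVneq r q) => [->|Hne].
  rewrite subnn /=; have := place_nth (D i) (fill vs (map (block B (size vs)) (iota q.+1 m)) D Ks e)
    (_ : uniq (block B (size vs) q)) Hk.
  rewrite nth_mkseq // size_mkseq => -> //.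
  by apply: mkseq_uniq => x y /eqP; rewrite eqn_add2l => /eqP.
rewrite place_notin => [|/In_mkseq [k' Hk' E]].
  by rewrite IH //; [have -> : r - q = (r - q.+1).+1 by lia | lia].
have : q.+1 * size vs <= r * size vs by apply: leq_mul => //; lia.
by move: E; lia.
Qed.

Lemma In_le_foldr_maxn m s : List.In m s -> m <= foldr maxn 0 s.
Proof.
elim: s => [|x s IH] //= [->|/IH H]; first exact: leq_maxl.
exact: leq_trans H (leq_maxr _ _).
Qed.

Definition slot_bound (sls : seq (seq nat)) : nat := (foldr maxn 0 (flatten sls)).+1.

Lemma slot_bound_gt sls sl m : List.In sl sls -> List.In m sl -> m < slot_bound sls.
Proof.
move=> Hsl Hm; rewrite ltnS; apply: In_le_foldr_maxn.
elim: sls Hsl => [|sl' sls IH] //= [->|/IH H]; apply/List.in_app_iff; [left|right] => //.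
Qed.

Section DefinableParameters.
Variables (L : lang) (K : structure L).
Variables (ov nv : seq var) (d d' : nat -> asg K) (u : forall v : var, term L v.1).
(* Without this, [s] would become implicit in [A s a]. *)
Unset Implicit Arguments.
Variables (A A' : forall s, carrier K s -> Prop).
Set Implicit Arguments.
Hypothesis u_vars : forall v w, List.In v nv -> tvars (u v) w -> List.In w ov.
Hypothesis d'_teval : forall i v, List.In v nv -> d' i v.1 v.2 = teval (d i) (u v).
Hypothesis A'_teval : forall s a, A' s a ->
  exists (t : term L s) (h : asg K), (forall w, tvars t w -> A w.1 (h w.1 w.2)) /\ a = teval h t.

Let W := size ov.

Definition slot_of (B r : nat) (s : psort) (n : nat) : nat := B + r * W + vidx (s, n) ov.

Fixpoint place_defs B r (vs : seq var) (sl : seq nat) : seq (defn L) :=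
  match vs, sl with
  | v :: vs', n :: sl' =>
      existT (fun s => (nat * term L s)%type) v.1 (n, trename (slot_of B r) (u v))
        :: place_defs B r vs' sl'
  | _, _ => [::]
  end.

Fixpoint fill_defs B r (sls : seq (seq nat)) : seq (defn L) :=
  if sls is sl :: sls' then place_defs B r nv sl ++ fill_defs B r.+1 sls' else [::].

Lemma tvars_fill_defs B r sls p v :
  List.In p (fill_defs B r sls) -> tvars (projT2 p).2 v ->
  exists r' n, [/\ r <= r' < r + size sls, List.In (v.1, n) ov & v.2 = slot_of B r' v.1 n].
Proof.
elim: sls r => [|sl sls IH] r //= /List.in_app_iff [Hp|Hp] Hv; last first.
  by have [r' [n [Hr Hn E]]] := IH _ Hp Hv; exists r', n; split => //; lia.
exists r; suff [n Hn E] : exists2 n, List.In (v.1, n) ov & v.2 = slot_of B r v.1 n.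
  by exists n; split => //; lia.
have Hplace vs : (forall w, List.In w vs -> List.In w nv) -> forall sl',
    List.In p (place_defs B r vs sl') -> exists2 n, List.In (v.1, n) ov & v.2 = slot_of B r v.1 n.
  elim: vs => [|w vs IHv] Hvs [|m sl'] //= [Ep|]; last by apply: IHv => w' Hw'; apply: Hvs; right.
  move: Hv; rewrite -Ep => /tvars_trename [n Hn E]; exists n => //.
  by apply: u_vars Hn; apply: Hvs; left.
exact: Hplace Hp.
Qed.

Lemma slotvar_fill_defs B r sls v :
  slotvar nv sls v -> List.In v (map (@defn_var L) (fill_defs B r sls)).
Proof.
case=> sl [Hsl [j [Hj ->]]].
have Hplace : forall r' vs sl' k, k < minn (size vs) (size sl') ->
    List.In ((nth (VF, 0) vs k).1, nth 0 sl' k) (map (@defn_var L) (place_defs B r' vs sl')).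
  move=> r' vs; elim: vs => [|w vs IHv] [|m sl'] //= [_|k Hk]; first by left.
  by right; apply: IHv; rewrite minnSS in Hk.
elim: sls r Hsl => [|sl' sls IH] r //= Hsl.
rewrite map_cat List.in_app_iff; case: Hsl => [->|Hsl]; first by left; apply: Hplace.
by right; apply: IH.
Qed.

Lemma defn_var_fill_defs B r sls v :
  List.In v (map (@defn_var L) (fill_defs B r sls)) ->
  exists2 sl, List.In sl sls & List.In v.2 sl.
Proof.
elim: sls r => [|sl sls IH] r //=; rewrite map_cat List.in_app_iff => -[H|/IH [sl' H1 H2]].
- exists sl; first by left.
  by elim: nv sl H => [|w vs IHv] [|m sl] //= [<-|/IHv]; [left | right].
- by exists sl'; first right.
Qed.

Lemma fill_upd_defs B (g : asg K) (sls : seq (seq nat)) r (Ks : seq nat) (base : asg K) :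
  size Ks = size sls ->
  (forall r', r <= r' < r + size sls -> forall v, List.In v nv ->
     teval g (trename (slot_of B r') (u v)) = d' (nth 0 Ks (r' - r)) v.1 v.2) ->
  fill nv sls d' Ks base = upd_defs g (fill_defs B r sls) base.
Proof.
elim: sls r Ks => [|sl sls IH] r [|i Ks] //= [Hs] Hg.
rewrite upd_defs_cat -(IH r.+1 Ks) => [||r' Hr' v Hv]; last 2 first.
- by [].
- rewrite (Hg r') //; last by lia.
  by have -> : r' - r = (r' - r.+1).+1 by lia.
have Hplace : forall vs sl' base',
    (forall v, List.In v vs -> teval g (trename (slot_of B r) (u v)) = d' i v.1 v.2) ->
    place vs sl' (d' i) base' = upd_defs g (place_defs B r vs sl') base'.
  move=> vs; elim: vs => [|w vs IHv] [|m sl'] //= base' Hw.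
  by rewrite IHv => [|v Hv]; [rewrite Hw //; left | apply: Hw; right].
by apply: Hplace => v Hv; rewrite (Hg r) ?subnn //; lia.
Qed.

Lemma fill_blocks_slot_of B (sls : seq (seq nat)) (Ks : seq nat) (e : asg K) r s n :
  size Ks = size sls -> r < size sls -> List.In (s, n) ov ->
  fill ov (mkseq (block B W) (size sls)) d Ks e s (slot_of B r s n) = d (nth 0 Ks r) s n.
Proof.
move=> HKs Hr Hin; have Hk := vidx_lt Hin; have Hnth := nth_vidx Hin.
have := fill_blocks_nth B d e HKs (_ : 0 <= r < 0 + size sls) Hk.
by rewrite Hnth subn0 /= => ->.
Qed.

Definition translatable theta (sls : seq (seq nat)) (e : asg K) :=
  exists theta_o sls_o (e_o : asg K), size sls_o = size sls /\
    (forall s n, fvF theta_o (s, n) -> ~ slotvar ov sls_o (s, n) -> A s (e_o s n)) /\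
    forall Ks, size Ks = size sls ->
      (sat (fill nv sls d' Ks e) theta <-> sat (fill ov sls_o d Ks e_o) theta_o).

(* Each slot of [nv] is let-bound to its defining term, evaluated in a fresh
   block of slots for [ov] placed above all variables in sight. *)
Lemma translatable_slots theta sls (e : asg K) :
  (forall s n, fvF theta (s, n) -> ~ slotvar nv sls (s, n) -> A s (e s n)) ->
  translatable theta sls e.
Proof.
move=> HA; pose B := maxn (fbound theta) (slot_bound sls).
have HBf : fbound theta <= B by apply: leq_maxl.
have HBs : slot_bound sls <= B by apply: leq_maxr.
pose P := fill_defs B 0 sls; pose sls_o := mkseq (block B W) (size sls).
exists (flet P theta), sls_o, e; split; first by rewrite size_mkseq.
split=> [s n /fvF_flet [[Hf Hn]|[p Hp Hv]] Hns|Ks HKs].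
- by apply: HA Hf _ => /(slotvar_fill_defs B 0) Hsl; apply: Hn.
- case: Hns; have [r [n' [Hr Hin /= ->]]] := tvars_fill_defs Hp Hv.
  exists (block B W r); split; first by apply/In_mkseq; exists r => //; lia.
  exists (vidx (s, n') ov); split; first by rewrite size_mkseq minnn vidx_lt.
  by rewrite nth_vidx // nth_mkseq ?vidx_lt.
- pose g := fill ov sls_o d Ks e.
  have -> : fill nv sls d' Ks e = upd_defs g P e.
    apply: fill_upd_defs => // r Hr v Hv.
    rewrite teval_trename subn0 d'_teval //; apply: teval_ext => s' n' Hv'.
    by apply: fill_blocks_slot_of; [| lia | exact: u_vars Hv'].
  rewrite sat_flet => [|p Hp v Hv /defn_var_fill_defs [sl Hsl Hm]]; last first.
    have [r [n' [_ _ E]]] := tvars_fill_defs Hp Hv.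
    by have := slot_bound_gt Hsl Hm; rewrite E /slot_of; lia.
  apply: sat_ext => s n Hf; apply: upd_defs_ext; rewrite /g fill_notin //.
  move=> sl /In_mkseq [r _ ->] /In_mkseq [k _ E].
  by have /= := fbound_gt Hf; rewrite E; lia.
Qed.

(* A parameter [e v] in [A'] is replaced by its defining term, with the
   variables of the term shifted above everything in sight. *)
Lemma translatable_params Lq theta sls (e : asg K) :
  (forall s n, fvF theta (s, n) -> ~ slotvar nv sls (s, n) ->
     A s (e s n) \/ (List.In (s, n) Lq /\ A' s (e s n))) ->
  translatable theta sls e.
Proof.
elim: Lq theta sls e => [|v0 Lq IH] theta sls e HA.
  by apply: translatable_slots => s n Hf Hns; case: (HA s n Hf Hns) => // -[[]].
case: (pselect (exists s n, [/\ v0 = (s, n), fvF theta (s, n), ~ slotvar nv sls (s, n)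
                              & A' s (e s n)])) => [[s [n [Ev0 Hf Hns HA']]]|Hno]; last first.
  apply: IH => s n Hf Hns; case: (HA s n Hf Hns) => [HA0|[[E|Hin] HA']]; [by left | | by right].
  by case: Hno; exists s, n; split.
have [t [h [Ht Eval]]] := A'_teval HA'.
pose B := maxn (fbound theta) (slot_bound sls).
have HBf : fbound theta <= B by apply: leq_maxl.
have HBs : slot_bound sls <= B by apply: leq_maxr.
pose t' := trename (fun _ m => B + m) t.
pose e1 : asg K := fun s0 m => if B <= m then h s0 (m - B) else e s0 m.
have He1 s0 m : m < B -> e1 s0 m = e s0 m by rewrite /e1 ltnNge => /negbTE ->.
have Hn : n < B by have /= := fbound_gt Hf; lia.
have [|theta_o [sls_o [e_o [Hsz [HA_o Heq]]]]] :=
  IH (flet [:: existT _ s (n, t')] theta) sls e1.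
  move=> s0 m /fvF_flet [[Hf0 Hn0]|[p [<-|[]] /tvars_trename [k Hk /= ->]]] Hns0; last first.
    by left; rewrite /e1 leq_addr addKn; apply: (Ht (s0, k)).
  have Hm : m < B by have /= := fbound_gt Hf0; lia.
  rewrite He1 //; case: (HA s0 m Hf0 Hns0) => [HA0|[[E|Hin] HA0]]; [by left | | by right].
  by case: Hn0; left; rewrite -E Ev0.
exists theta_o, sls_o, e_o; do 2!split=> //; move=> Ks HKs; rewrite -Heq //.
rewrite sat_flet /= => [|p [<-|//] v /tvars_trename [k _ /= Ev] [E|//]]; last first.
  by move: Ev; rewrite -E /=; lia.
have -> : teval (fill nv sls d' Ks e1) t' = e s n.
  rewrite teval_trename Eval; apply: teval_ext => s0 k _.
  rewrite fill_notin => [|sl Hsl Hm]; last by have := slot_bound_gt Hsl Hm; lia.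
  by rewrite /e1 leq_addr addKn.
apply: sat_ext => s0 m Hf0; case: (var_eqbP (s, n) (s0, m)) => [[<- <-]|Ne].
  by rewrite upd_same fill_nonslot.
have Hm : m < B by have /= := fbound_gt Hf0; lia.
by rewrite upd_other //; apply: fill_ext; rewrite He1.
Qed.

Lemma indisc_over_definable : indisc_over ov d A -> indisc_over nv d' A'.
Proof.
move=> Hind theta sls I J e HA' HI HJ sI sJ.
pose Lq := [seq (VF, n) | n <- iota 0 (fbound theta)] ++
           [seq (VG, n) | n <- iota 0 (fbound theta)] ++
           [seq (RF, n) | n <- iota 0 (fbound theta)].
have HLq s n : n < fbound theta -> List.In (s, n) Lq.
  move=> Hn; have Hs (s' : psort) : List.In (s', n) [seq (s', m) | m <- iota 0 (fbound theta)].
    by apply/List.in_map_iff; exists n; split => //; apply/List.in_seq; lia.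
  by rewrite !List.in_app_iff; case: s; auto.
have [|theta_o [sls_o [e_o [Hsz [HA Heq]]]]] := @translatable_params Lq theta sls e.
  by move=> s n Hf Hns; right; split; [apply: HLq; apply: (fbound_gt Hf) | apply: HA'].
by rewrite Heq // Heq //; apply: Hind; rewrite ?Hsz.
Qed.

End DefinableParameters.

Lemma mut_indisc_definable (L : lang) (K : structure L) (kap : Type)
    (ov nv : kap -> seq var) (d d' : kap -> nat -> asg K)
    (u : kap -> forall v : var, term L v.1) :
  (forall al v w, List.In v (nv al) -> tvars (u al v) w -> List.In w (ov al)) ->
  (forall al i v, List.In v (nv al) -> d' al i v.1 v.2 = teval (d al i) (u al v)) ->
  mut_indisc ov d -> mut_indisc nv d'.
Proof.
move=> u_vars d'_teval Hmi al.
apply: (indisc_over_definable (u_vars al) (d'_teval al) _ (Hmi al)).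
move=> s a [be [i [n [Hbe [Hin ->]]]]]; exists (u be (s, n)), (d be i); split.
  move=> w Hw; exists be, i, w.2; do 2!split => //.
  by case: w Hw => s' n' /(u_vars _ _ _ Hin).
exact: (d'_teval be i (s, n) Hin).
Qed.

Section TermsAsParameters.
Variables (L : lang) (K : structure L) (kap : Type) (xn : nat).
Variables (psi : kap -> formula L) (ys : kap -> seq var) (zs zs' : kap -> seq nat).
Variables (b c c' : kap -> nat -> asg K) (ts : kap -> seq {s : psort & term L s}).

Definition old_vars al := ys al ++ zvars (zs al) ++ zvars (zs' al).
Definition old_params al i := ovr (ys al) (b al i) (ovr (zvars (zs al)) (c al i) (c' al i)).

Hypothesis ys_sort : forall al v, List.In v (ys al) -> v.1 = VG \/ v.1 = RF.
Hypothesis old_vars_NoDup : forall al, List.NoDup (old_vars al).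
Hypothesis ts_sort : forall al t, List.In t (ts al) ->
  (projT1 t = VG \/ projT1 t = RF) /\ ~ tvars (projT2 t) (VF, xn).
Hypothesis psi_covF : forall al, covF (zs al) (ts al) [::] (psi al).
Hypothesis pattern : indisc_inp_pattern (@xeqx L xn) xn psi old_vars old_params.

Definition param_terms al :=
  filter (fun t => `[< forall v, tvars (projT2 t) v -> List.In v (old_vars al) >]) (ts al).

Definition fresh_idx al := (foldr maxn 0 (map snd (ys al))).+1.

Let t0 : {s : psort & term L s} := existT _ VG (gzero L).

(* [fresh_idx] clears every index of [ys], the only other VG/RF-sorted parameters. *)
Definition term_vars al :=
  mkseq (fun k => (projT1 (nth t0 (param_terms al) k), fresh_idx al + k))
        (size (param_terms al)).

Definition cast_term (t : {s : psort & term L s}) (s : psort) : term L s :=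
  let: existT s' t' := t in
  if sort_eq_dec s' s is left E then eq_rect s' (term L) t' s E else tvar L s 0.

Definition term_of al (v : var) : term L v.1 :=
  if memv v (term_vars al) then cast_term (nth t0 (param_terms al) (v.2 - fresh_idx al)) v.1
  else tvar L v.1 v.2.

Definition new_b al i : asg K := fun s n =>
  if memv (s, n) (term_vars al) then teval (old_params al i) (term_of al (s, n)) else b al i s n.
Definition new_ys al := ys al ++ term_vars al.
Definition new_vars al := new_ys al ++ zvars (zs' al).
Definition new_params al i := ovr (new_ys al) (new_b al i) (c' al i).
Definition new_psi al :=
  fexVF (zs al) (fand (feqs (term_vars al) (term_of al)) (psi al)).

Lemma fresh_idx_gt al v : List.In v (ys al) -> v.2 < fresh_idx al.
Proof. by move=> Hv; rewrite ltnS; apply/In_le_foldr_maxn/List.in_map_iff; exists v. Qed.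

Lemma In_term_vars al w : List.In w (term_vars al) <->
  exists2 k, k < size (param_terms al) &
             w = (projT1 (nth t0 (param_terms al) k), fresh_idx al + k).
Proof. exact: In_mkseq. Qed.

Lemma param_terms_nth al k : k < size (param_terms al) ->
  List.In (nth t0 (param_terms al) k) (ts al) /\
  (forall v, tvars (projT2 (nth t0 (param_terms al) k)) v -> List.In v (old_vars al)).
Proof. by move=> /(nth_In t0) /List.filter_In [H /asboolP]. Qed.

Lemma term_vars_sort al w : List.In w (term_vars al) -> w.1 = VG \/ w.1 = RF.
Proof. by case/In_term_vars => k Hk ->; case: (ts_sort (param_terms_nth Hk).1). Qed.

Lemma term_vars_not_ys al w : List.In w (term_vars al) -> ~ List.In w (ys al).
Proof. by case/In_term_vars => k _ -> /fresh_idx_gt /=; rewrite ltnNge leq_addr. Qed.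

Lemma term_vars_not_zvars al w ns : List.In w (term_vars al) -> ~ List.In w (zvars ns).
Proof. by move=> /term_vars_sort Hs /In_zvars [E _]; rewrite E in Hs; case: Hs. Qed.

Lemma ys_not_zvars al w ns : List.In w (ys al) -> ~ List.In w (zvars ns).
Proof. by move=> /ys_sort Hs /In_zvars [E _]; rewrite E in Hs; case: Hs. Qed.

Lemma term_of_term_vars al k : k < size (param_terms al) ->
  term_of al (projT1 (nth t0 (param_terms al) k), fresh_idx al + k)
  = projT2 (nth t0 (param_terms al) k).
Proof.
move=> Hk; rewrite /term_of ifT; last by apply/memvP/In_term_vars; exists k.
rewrite /= addKn; case: (nth _ _ _) => s t /=.
by case: sort_eq_dec => // E; rewrite (UIP_dec sort_eq_dec E erefl).
Qed.

Lemma term_of_notin al v : ~ List.In v (term_vars al) -> term_of al v = tvar L v.1 v.2.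
Proof. by rewrite /term_of; case: memvP. Qed.

Lemma In_new_vars al v : List.In v (new_vars al) <->
  List.In v (ys al) \/ List.In v (term_vars al) \/ List.In v (zvars (zs' al)).
Proof. by rewrite /new_vars /new_ys !List.in_app_iff; tauto. Qed.

Lemma In_old_vars al v : List.In v (old_vars al) <->
  List.In v (ys al) \/ List.In v (zvars (zs al)) \/ List.In v (zvars (zs' al)).
Proof. by rewrite /old_vars !List.in_app_iff. Qed.

Lemma term_of_vars al v w :
  List.In v (new_vars al) -> tvars (term_of al v) w -> List.In w (old_vars al).
Proof.
case: (memvP v (term_vars al)) => Hw.
  case/In_term_vars: (Hw) => k Hk -> _; rewrite term_of_term_vars //.
  exact: (param_terms_nth Hk).2.
rewrite term_of_notin //= => /In_new_vars Hv ->; case: v Hv Hw => s n Hv Hw.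
by apply/In_old_vars; tauto.
Qed.

Lemma zs'_not_zs al v : List.In v (zvars (zs' al)) -> ~ List.In v (zvars (zs al)).
Proof.
move=> H1 H2; exact: NoDup_app_disjoint (List.NoDup_app_remove_l _ _ (old_vars_NoDup al)) H2 H1.
Qed.

Lemma old_params_zs' al i v :
  List.In v (zvars (zs' al)) -> old_params al i v.1 v.2 = c' al i v.1 v.2.
Proof.
move=> H; rewrite /old_params ovr_notin => [|/ys_not_zvars /(_ H)] //.
by rewrite ovr_notin //; apply: zs'_not_zs.
Qed.

Lemma new_params_teval al i v :
  List.In v (new_vars al) -> new_params al i v.1 v.2 = teval (old_params al i) (term_of al v).
Proof.
move=> Hv; case: (memvP v (term_vars al)) => Hw.
  rewrite /new_params ovr_in; last by apply/List.in_app_iff; right.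
  by case: v Hv Hw => s n Hv Hw; rewrite /new_b; case: memvP.
rewrite term_of_notin //=; case/In_new_vars: Hv => [Hy|[//|Hz]].
  rewrite /new_params ovr_in; last by apply/List.in_app_iff; left.
  rewrite /old_params ovr_in //; case: v Hy Hw => s n Hy Hw.
  by rewrite /new_b; case: memvP.
rewrite /new_params ovr_notin ?old_params_zs' // => /List.in_app_iff [H|H].
  exact: ys_not_zvars H Hz.
exact: term_vars_not_zvars H Hz.
Qed.

Lemma new_params_old al i v : List.In v (ys al) \/ List.In v (zvars (zs' al)) ->
  new_params al i v.1 v.2 = old_params al i v.1 v.2.
Proof.
move=> H; rewrite new_params_teval; last by apply/In_new_vars; tauto.
rewrite term_of_notin // => Hw.
by case: H => H; [apply: term_vars_not_ys Hw H | apply: term_vars_not_zvars Hw H].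
Qed.

Lemma x_notin_old_vars al : ~ List.In (VF, xn) (old_vars al).
Proof. by case: pattern => _ [H _]; apply: H. Qed.

Lemma x_notin_new_vars al : ~ List.In (VF, xn) (new_vars al).
Proof.
case/In_new_vars => [H|[/term_vars_sort [] //|H]]; apply: (@x_notin_old_vars al).
  by apply/In_old_vars; left.
by apply/In_old_vars; right; right.
Qed.

Lemma x_notin_zs al : ~ List.In (VF, xn) (zvars (zs al)).
Proof. by move=> H; apply: (@x_notin_old_vars al); apply/In_old_vars; tauto. Qed.

Lemma fvF_new_psi al v : fvF (new_psi al) v -> v = (VF, xn) \/ List.In v (new_vars al).
Proof.
have Hold w : List.In w (old_vars al) -> ~ List.In w (zvars (zs al)) -> List.In w (new_vars al).
  by move=> /In_old_vars Hw Hz; apply/In_new_vars; tauto.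
case/fvF_fexVF => /= [[/fvF_feqs [w Hw [->|Ht]]|Hf] Hz].
- by right; apply/In_new_vars; tauto.
- by right; apply: Hold Hz; apply: term_of_vars Ht; apply/In_new_vars; tauto.
- by case: pattern => Hfv _; case: (Hfv al v Hf) => [|/Hold]; auto.
Qed.

Lemma new_vars_NoDup al : List.NoDup (new_vars al).
Proof.
have Hy := List.NoDup_app_remove_r _ _ (old_vars_NoDup al).
have Hz := List.NoDup_app_remove_l _ _ (List.NoDup_app_remove_l _ _ (old_vars_NoDup al)).
apply: List.NoDup_app => [||v /List.in_app_iff [H|H] H'] //.
- apply: List.NoDup_app => // [|v Hv /term_vars_not_ys //].
  rewrite /term_vars /mkseq; elim: (size _) 0 => [|n IH] m /=; first by constructor.
  constructor=> [/List.in_map_iff [k [[_ E] /List.in_seq Hk]]|]; [lia | exact: IH].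
- by apply: NoDup_app_disjoint (old_vars_NoDup al) H _; apply/List.in_app_iff; right.
- exact: term_vars_not_zvars H H'.
Qed.

Lemma inst_old_params al i e a v : List.In v (old_vars al) ->
  inst xn (old_vars al) (old_params al i) e a v.1 v.2 = old_params al i v.1 v.2.
Proof. by move=> Hv; apply: inst_in Hv (@x_notin_old_vars al). Qed.

Lemma inst_new_params al i e a v : List.In v (new_vars al) ->
  inst xn (new_vars al) (new_params al i) e a v.1 v.2 = new_params al i v.1 v.2.
Proof. by move=> Hv; apply: inst_in Hv (@x_notin_new_vars al). Qed.

Lemma inst_new_params_old al i e a v :
  List.In v (old_vars al) -> ~ List.In v (zvars (zs al)) ->
  inst xn (new_vars al) (new_params al i) e a v.1 v.2 = old_params al i v.1 v.2.
Proof.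
move=> /In_old_vars Hv Hz; rewrite inst_new_params ?new_params_old; try tauto.
by apply/In_new_vars; tauto.
Qed.

(* The equations of [new_psi] force the covering terms to take their old
   values, and [psi] depends on [zs al] only through these terms. *)
Lemma new_psi_sat_psi al i e a :
  sat (inst xn (new_vars al) (new_params al i) e a) (new_psi al) ->
  sat (inst xn (old_vars al) (old_params al i) e a) (psi al).
Proof.
case/sat_fexVF => h /= [/sat_feqs Heqs Hpsi].
pose Q v := v = (VF, xn) \/ List.In v (old_vars al).
apply: (proj1 (covF_sat (Q := Q) _ _ (psi_covF al) _) Hpsi) => [v Hq Hnz|t Ht HQ _|v Hv _].
- have Hz : ~ List.In v (zvars (zs al)).
    by move=> /In_zvars [? ?]; apply: Hnz; do 2!split => //; case.
  rewrite ovr_notin //; case: Hq => [[]|[E|Hv]]; first by rewrite E /inst !upd_same.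
  by rewrite inst_new_params_old // inst_old_params.
- have Hold v : tvars (projT2 t) v -> List.In v (old_vars al).
    by move=> Hv; case: (HQ v Hv) => // E; case: (ts_sort Ht); rewrite -E.
  have /(In_nth_index t0) [k Hk Ek] : List.In t (param_terms al).
    by apply/List.filter_In; split => //; apply/asboolP.
  have Hw : List.In (projT1 (nth t0 (param_terms al) k), fresh_idx al + k) (term_vars al).
    by apply/In_term_vars; exists k.
  have Hwn : List.In (projT1 (nth t0 (param_terms al) k), fresh_idx al + k) (new_vars al).
    by apply/In_new_vars; tauto.
  rewrite -Ek -term_of_term_vars // -(Heqs _ Hw) ovr_notin; last exact: term_vars_not_zvars Hw.
  rewrite inst_new_params // new_params_teval //; apply: teval_ext => s n Hv.
  by rewrite (@inst_old_params _ _ _ _ (s, n)) //; apply: term_of_vars Hv.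
- exact: (proj1 pattern).
Qed.

Lemma psi_sat_new_psi al i e a :
  sat (inst xn (old_vars al) (old_params al i) e a) (psi al) ->
  sat (inst xn (new_vars al) (new_params al i) e a) (new_psi al).
Proof.
set G := inst xn (new_vars al) (new_params al i) e a.
have Hovr v : List.In v (old_vars al) ->
    ovr (zvars (zs al)) (old_params al i) G v.1 v.2 = old_params al i v.1 v.2.
  move=> Hv; case: (memvP v (zvars (zs al))) => Hz; first by rewrite ovr_in.
  by rewrite ovr_notin // /G inst_new_params_old.
move=> Hpsi; apply/sat_fexVF; exists (old_params al i); split.
  apply/sat_feqs => w Hw; have Hwn : List.In w (new_vars al) by apply/In_new_vars; tauto.
  rewrite ovr_notin; last exact: term_vars_not_zvars Hw.
  rewrite /G inst_new_params // new_params_teval //; apply: teval_ext => s n Hv.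
  by rewrite (Hovr (s, n)) //; apply: term_of_vars Hwn Hv.
move: Hpsi; apply: sat_ext_imp => s n /(proj1 pattern) [[-> ->]|Hv].
  rewrite (@ovr_notin _ _ _ _ _ (VF, xn)); last exact: x_notin_zs.
  by rewrite /G /inst !upd_same.
by rewrite (@inst_old_params _ _ _ _ (s, n)) // (Hovr (s, n)).
Qed.

Lemma new_pattern : indisc_inp_pattern (@xeqx L xn) xn new_psi new_vars new_params.
Proof.
have [_ [_ [Hpi [Hmi [Hinc Hcons]]]]] := pattern.
split; first exact: fvF_new_psi.
split; first exact: x_notin_new_vars.
split; first exact: Hpi.
split; first exact: mut_indisc_definable term_of_vars new_params_teval Hmi.
split=> [al|F P HP].
  by have [I HI] := Hinc al; exists I => e a Hall; apply: (HI e a) => i /Hall /new_psi_sat_psi.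
have [e [a [HP' Hrows]]] := Hcons F P HP.
by exists e, a; split => // al /Hrows /psi_sat_new_psi.
Qed.

End TermsAsParameters.

Theorem lemma4p3 (L : lang) (T : theory L) :
  hvf_theory T -> relQE T ->
  forall (Lam : Type) (K : structure L), model T K -> saturated Lam K ->
  forall (kap : Type) (xn : nat) (psi : kap -> formula L)
         (ys : kap -> seq var) (zs zs' : kap -> seq nat)
         (b c c' : kap -> nat -> asg K),
    (* y_al : VG/RF-psort variables; x, y_al, z_al, z'_al pairwise distinct *)
    (forall al v, List.In v (ys al) -> v.1 = VG \/ v.1 = RF) ->
    (forall al, List.NoDup (ys al ++ zvars (zs al) ++ zvars (zs' al))) ->
    indisc_inp_pattern (@xeqx L xn) xn psi
      (fun al => ys al ++ zvars (zs al) ++ zvars (zs' al))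
      (fun al i => ovr (ys al) (b al i) (ovr (zvars (zs al)) (c al i) (c' al i))) ->
    (forall al, exists ts : seq {s : psort & term L s},
        (forall t, List.In t ts -> (projT1 t = VG \/ projT1 t = RF) /\
                                   ~ tvars (projT2 t) (VF, xn)) /\
        covF (zs al) ts [::] (psi al)) ->
    exists (ys' : kap -> seq var) (b' : kap -> nat -> asg K)
           (phi' : kap -> formula L),
      (forall al v, List.In v (ys' al) -> v.1 = VG \/ v.1 = RF) /\
      (forall al, List.NoDup (ys' al ++ zvars (zs' al))) /\
      indisc_inp_pattern (@xeqx L xn) xn phi'
        (fun al => ys' al ++ zvars (zs' al))
        (fun al i => ovr (ys' al) (b' al i) (c' al i)).
Proof.
move=> _ _ _ K _ _ kap xn psi ys zs zs' b c c' Hys Hnd Hpat.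
move=> /choice [ts /all_and2 [ts_sort psi_covF]].
exists (new_ys ys zs zs' ts), (new_b ys zs zs' b c c' ts), (new_psi psi ys zs zs' ts).
split; [|split].
- by move=> al v /List.in_app_iff [/Hys|/(term_vars_sort ts_sort)].
- exact: new_vars_NoDup Hnd ts_sort.
- exact: new_pattern.
Qed.
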